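(* Let ${\tt D}=({\tt M},{\tt C},\equiv,\underline{\cdot})$ be a distillery. Then for every execution $\rho: s\to^* s'$ of ${\tt M}$ (starting from an initial state $s$) there is a derivation $d:\underline{s}\multimap^*\equiv\underline{s'}$ (i.e. a sequence of $\multimap$-steps from $\underline{s}$ to some term $t$ with $t\equiv\underline{s'}$) such that $|\rho|_{\mathtt m}=|d|_{\mathtt m}$, $|\rho|_{\mathtt e}=|d|_{\mathtt e}$ and $|\rho|_{\mathtt p}=|d|$.
   Context: A distillery ${\tt D}=({\tt M},{\tt C},\equiv,\underline{\cdot})$ consists of: (1) an abstract machine ${\tt M}$, i.e. a deterministic labelled transition system $\to$ on states, with a distinguished class of initial states (in bijection with closed $\lambda$-terms; states reachable from initial ones by $\to$ are called reachable), and a partition of the transitions into commutative ones ($\to_{\mathtt c}$) and principal ones, the latter partitioned into multiplicative ($\to_{\mathtt m}$) and exponential ($\to_{\mathtt e}$); (2) a calculus ${\tt C}$ given by two rewriting relations $\multimap_{\mathtt m},\multimap_{\mathtt e}$ on terms, with $\multimap:=\multimap_{\mathtt m}\cup\multimap_{\mathtt e}$; (3) an equivalence $\equiv$ on terms which is a strong bisimulation w.r.t. $\multimap_{\mathtt m}$ and $\multimap_{\mathtt e}$: for $\mathtt x\in\{\mathtt m,\mathtt e\}$, $t\equiv u$ and $t\multimap_{\mathtt x}t'$ imply that $u\multimap_{\mathtt x}u'$ for some $u'$ with $t'\equiv u'$; (4) a decoding function $\underline{\cdot}$ from states to terms such that, for reachable states $s$: $s\to_{\mathtt c}s'$ implies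 $\underline{s}\equiv\underline{s'}$; $s\to_{\mathtt m}s'$ implies $\underline{s}\multimap_{\mathtt m} t\equiv\underline{s'}$ for some $t$; $s\to_{\mathtt e}s'$ implies $\underline{s}\multimap_{\mathtt e}t\equiv\underline{s'}$ for some $t$. An execution is a sequence of transitions starting from an initial state. For an execution $\rho$, $|\rho|_{\mathtt m}$, $|\rho|_{\mathtt e}$, $|\rho|_{\mathtt p}$ denote its numbers of multiplicative, exponential and principal transitions; for a derivation $d$ (sequence of $\multimap$-steps), $|d|$ is its length and $|d|_{\mathtt m}$, $|d|_{\mathtt e}$ its numbers of $\multimap_{\mathtt m}$ and $\multimap_{\mathtt e}$ steps. *)

From Stdlib Require Import List Relations.
Import ListNotations.
Set Implicit Arguments.

(* Closed lambda-terms (de Bruijn), used only to describe initial states. *)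
Inductive lterm : Type :=
| LVar : nat -> lterm
| LApp : lterm -> lterm -> lterm
| LAbs : lterm -> lterm.

Fixpoint closed_at (k : nat) (t : lterm) : Prop :=
  match t with
  | LVar n => n < k
  | LApp t u => closed_at k t /\ closed_at k u
  | LAbs t => closed_at (S k) t
  end.

Definition closed_lterm := { t : lterm | closed_at 0 t }.

(* Kinds of machine transitions: commutative, multiplicative, exponential. *)
Inductive mlabel : Type := Lc | Lm | Le.
Inductive clabel : Type := Cm | Ce.

Definition reachable {St : Type} (step : mlabel -> St -> St -> Prop)
  (init : St -> Prop) (s : St) : Prop :=
  exists s0, init s0 /\
    clos_refl_trans St (fun a b => exists l, step l a b) s0 s.

Record distillery := {
  State : Type;
  Term : Type;
  mstep : mlabel -> State -> State -> Prop;
  deterministic : forall l1 l2 s s1 s2,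
      mstep l1 s s1 -> mstep l2 s s2 -> l1 = l2 /\ s1 = s2;
  initial : State -> Prop;
  compile : closed_lterm -> State;
  compile_inj : forall t u, compile t = compile u -> t = u;
  initial_compile : forall s, initial s <-> exists t, compile t = s;
  cstep : clabel -> Term -> Term -> Prop;
  equiv : Term -> Term -> Prop;
  equiv_equivalence : equivalence Term equiv;
  equiv_bisim : forall x t u t', equiv t u -> cstep x t t' ->
      exists u', cstep x u u' /\ equiv t' u';
  decode : State -> Term;
  decode_c : forall s s', reachable mstep initial s ->
      mstep Lc s s' -> equiv (decode s) (decode s');
  decode_m : forall s s', reachable mstep initial s ->
      mstep Lm s s' -> exists t, cstep Cm (decode s) t /\ equiv t (decode s');
  decode_e : forall s s', reachable mstep initial s ->
      mstep Le s s' -> exists t, cstep Ce (decode s) t /\ equiv t (decode s')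
}.

Inductive exec (D : distillery) : State D -> list mlabel -> State D -> Prop :=
| exec_nil : forall s, exec D s [] s
| exec_cons : forall l s1 s2 ls s3,
    mstep D l s1 s2 -> exec D s2 ls s3 -> exec D s1 (l :: ls) s3.

Definition execution (D : distillery) (s : State D) (rho : list mlabel) (s' : State D) :=
  initial D s /\ exec D s rho s'.

Inductive deriv (D : distillery) : Term D -> list clabel -> Term D -> Prop :=
| deriv_nil : forall t, deriv D t [] t
| deriv_cons : forall x t1 t2 ds t3,
    cstep D x t1 t2 -> deriv D t2 ds t3 -> deriv D t1 (x :: ds) t3.

Definition is_Lm l := match l with Lm => true | _ => false end.
Definition is_Le l := match l with Le => true | _ => false end.
Definition is_principal l := match l with Lc => false | _ => true end.
Definition is_Cm x := match x with Cm => true | Ce => false end.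
Definition is_Ce x := match x with Ce => true | Cm => false end.

Definition exec_m (rho : list mlabel) := length (filter is_Lm rho).
Definition exec_e (rho : list mlabel) := length (filter is_Le rho).
Definition exec_p (rho : list mlabel) := length (filter is_principal rho).
Definition deriv_m (d : list clabel) := length (filter is_Cm d).
Definition deriv_e (d : list clabel) := length (filter is_Ce d).

(* Each commutative transition is invisible up to [equiv] and each principal
   transition is matched by exactly one calculus step of the same kind.  Since
   [equiv] is a strong bisimulation, a step from the decoding can be replayed
   from any equivalent term; so the whole execution is simulated step by step
   from a term merely equivalent to the decoding of the current state, and the
   calculus labels are obtained by erasing commutative transitions. *)
(* [Relations] is imported first because it also defines an [equiv]. *)
From Stdlib Require Import List Relations.
Import ListNotations.

Definition calc_label (l : mlabel) : list clabel :=
  match l with Lc => [] | Lm => [Cm] | Le => [Ce] end.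

Definition calc_trace (rho : list mlabel) : list clabel := flat_map calc_label rho.

Lemma exec_m_calc_trace (rho : list mlabel) : exec_m rho = deriv_m (calc_trace rho).
Proof.
  unfold exec_m, deriv_m, calc_trace. induction rho as [|[] rho IH]; simpl; auto.
Qed.

Lemma exec_e_calc_trace (rho : list mlabel) : exec_e rho = deriv_e (calc_trace rho).
Proof.
  unfold exec_e, deriv_e, calc_trace. induction rho as [|[] rho IH]; simpl; auto.
Qed.

Lemma exec_p_calc_trace (rho : list mlabel) : exec_p rho = length (calc_trace rho).
Proof.
  unfold exec_p, calc_trace. induction rho as [|[] rho IH]; simpl; auto.
Qed.

Section Simulation.

Variable D : distillery.

Lemma reachable_mstep {l : mlabel} {s s' : State D} :
  reachable (mstep D) (initial D) s -> mstep D l s s' ->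
  reachable (mstep D) (initial D) s'.
Proof.
  intros [s0 [Hinit Hreach]] Hstep. exists s0. split; [exact Hinit|].
  apply rt_trans with s; [exact Hreach|]. apply rt_step. exists l. exact Hstep.
Qed.

Lemma deriv_app {t u v : Term D} {d1 d2 : list clabel} :
  deriv D t d1 u -> deriv D u d2 v -> deriv D t (d1 ++ d2) v.
Proof.
  induction 1 as [|x t1 t2 d t3 Hstep _ IH]; intros Hd2; simpl; auto.
  apply deriv_cons with t2; auto.
Qed.

Lemma equiv_cstep_replay {x : clabel} {u t t' v : Term D} :
  equiv D u t -> cstep D x t t' -> equiv D t' v ->
  exists u', cstep D x u u' /\ equiv D u' v.
Proof.
  destruct (equiv_equivalence D) as [_ Htrans Hsym].
  intros Hut Hstep Hv.
  destruct (equiv_bisim D x _ _ _ (Hsym _ _ Hut) Hstep) as (u' & Hstep' & Hu').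
  exists u'. split; [exact Hstep'|]. apply Htrans with t'; auto.
Qed.

Lemma mstep_simulation {l : mlabel} {s s' : State D} {u : Term D} :
  reachable (mstep D) (initial D) s -> mstep D l s s' ->
  equiv D u (decode D s) ->
  exists u', deriv D u (calc_label l) u' /\ equiv D u' (decode D s').
Proof.
  destruct (equiv_equivalence D) as [_ Htrans _].
  intros Hreach Hstep Hu. destruct l; simpl.
  - exists u. split; [constructor|]. apply Htrans with (decode D s); auto.
    exact (decode_c D s' Hreach Hstep).
  - destruct (decode_m D s' Hreach Hstep) as (t & Hc & Ht).
    destruct (equiv_cstep_replay Hu Hc Ht) as (u' & Hc' & Hu').
    exists u'. split; [|exact Hu']. apply deriv_cons with u'; [exact Hc'|constructor].
  - destruct (decode_e D s' Hreach Hstep) as (t & Hc & Ht).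
    destruct (equiv_cstep_replay Hu Hc Ht) as (u' & Hc' & Hu').
    exists u'. split; [|exact Hu']. apply deriv_cons with u'; [exact Hc'|constructor].
Qed.

Lemma exec_simulation {s s' : State D} {rho : list mlabel} :
  exec D s rho s' -> reachable (mstep D) (initial D) s ->
  forall u, equiv D u (decode D s) ->
  exists t, deriv D u (calc_trace rho) t /\ equiv D t (decode D s').
Proof.
  induction 1 as [s|l s1 s2 rho s3 Hstep _ IH]; intros Hreach u Hu.
  - exists u. split; [constructor|exact Hu].
  - destruct (mstep_simulation Hreach Hstep Hu) as (u' & Hd1 & Hu').
    destruct (IH (reachable_mstep Hreach Hstep) u' Hu') as (t & Hd2 & Ht).
    exists t. split; [exact (deriv_app Hd1 Hd2)|exact Ht].
Qed.

End Simulation.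

Theorem mainTheorem3 (D : distillery) (s s' : State D) (rho : list mlabel) :
  execution D s rho s' ->
  exists (d : list clabel) (t : Term D),
    deriv D (decode D s) d t /\ equiv D t (decode D s') /\
    exec_m rho = deriv_m d /\ exec_e rho = deriv_e d /\
    exec_p rho = length d.
Proof.
  intros [Hinit Hexec].
  assert (Hreach : reachable (mstep D) (initial D) s)
    by (exists s; split; [exact Hinit|apply rt_refl]).
  destruct (equiv_equivalence D) as [Hrefl _ _].
  destruct (exec_simulation D Hexec Hreach _ (Hrefl (decode D s))) as (t & Hd & Ht).
  exists (calc_trace rho), t.
  repeat split; auto using exec_m_calc_trace, exec_e_calc_trace, exec_p_calc_trace.
Qed.
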